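(* Let $n$ be an odd squarefree positive integer. If $n\equiv 5$ or $7\pmod 8$, then $c_1(n)=0$. If $n\equiv 3\pmod 4$, then $c_2(n)=0$.
   Context: Define the formal power series $g(T)=T\prod_{k=1}^{\infty}(1-T^{8k})(1-T^{16k})\in\mathbb{Z}[[T]]$ and, for $j=1,2$, $\theta_j(T)=1+2\sum_{k=1}^{\infty}T^{2jk^2}$. For $j=1,2$ and an integer $n>0$, $c_j(n)$ denotes the coefficient of $T^n$ in the formal power series $g(T)\theta_j(T)$. *)

(* Formal power series over Z are handled through their
   truncations: the coefficient of T^n in an infinite product/sum of the
   given shape only depends on the factors/terms of degree <= n, so we
   compute it in the polynomial truncation with index range k <= N, N = n. *)
From mathcomp Require Import all_boot all_order all_algebra.
Set Implicit Arguments. Unset Strict Implicit. Unset Printing Implicit Defensive.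
Import GRing.Theory.
Local Open Scope ring_scope.

Definition g_trunc (N : nat) : {poly int} :=
  'X * \prod_(1 <= k < N.+1) ((1 - 'X^(8 * k)) * (1 - 'X^(16 * k))).

Definition theta_trunc (j N : nat) : {poly int} :=
  1 + 2%:R * \sum_(1 <= k < N.+1) 'X^(2 * j * k ^ 2).

(* c_j(n) = coefficient of T^n in g(T) theta_j(T); the truncation at N = n
   is exact since all omitted factors are 1 + O(T^{n+1}) and omitted terms
   are O(T^{n+1}). *)
Definition c (j n : nat) : int := (g_trunc n * theta_trunc j n)`_n.

Definition squarefree (n : nat) : bool :=
  [forall p : 'I_n.+1, prime p ==> ~~ (p * p %| n)%N].

(* Call a polynomial supported on the residues rs modulo m when
   its coefficient of T^i vanishes unless i mod m lies in rs.  This notion is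
   stable under sums, and a product of polynomials supported on rs1 and rs2
   is supported on the residue sums {(a + b) mod m | a in rs1, b in rs2}.
   Modulo 8, every factor (1 - T^(8k)) (1 - T^(16k)) lives on residue 0, so
   g = T * prod(...) lives on residue 1; since a square is 0 or 1 mod 4, each
   exponent 2 j k^2 of theta_j is 0 or 2j mod 8.  Hence g * theta_j lives on
   the residues {1, 1 + 2j} mod 8, i.e. {1, 3} for j = 1 and {1, 5} for j = 2,
   and c_j(n) vanishes whenever n mod 8 avoids them.  This covers
   n = 5, 7 (mod 8) for c_1 and n = 3 (mod 4) for c_2. *)
From mathcomp Require Import all_boot all_order all_algebra.
From mathcomp Require Import zify.
Set Implicit Arguments. Unset Strict Implicit. Unset Printing Implicit Defensive.
Import GRing.Theory.
Local Open Scope ring_scope.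

Section ResidueSupport.
Variables (R : nzRingType) (m : nat).

Definition residue_support (rs : seq nat) (p : {poly R}) :=
  forall i, (i %% m)%N \notin rs -> p`_i = 0.

Lemma residue_support_sub rs1 rs2 p :
  {subset rs1 <= rs2} -> residue_support rs1 p -> residue_support rs2 p.
Proof. by move=> sub_rs supp i rs2'i; apply: supp; apply: contra rs2'i; apply: sub_rs. Qed.

Lemma residue_support0 rs : residue_support rs 0.
Proof. by move=> i _; rewrite coef0. Qed.

Lemma residue_supportD rs p q :
  residue_support rs p -> residue_support rs q -> residue_support rs (p + q).
Proof. by move=> supp suppq i rs'i; rewrite coefD supp ?suppq ?addr0. Qed.

Lemma residue_supportB rs p q :
  residue_support rs p -> residue_support rs q -> residue_support rs (p - q).
Proof. by move=> supp suppq i rs'i; rewrite coefB supp ?suppq ?subr0. Qed.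

Lemma residue_supportMn rs p k :
  residue_support rs p -> residue_support rs (p *+ k).
Proof. by move=> supp i rs'i; rewrite coefMn supp ?mul0rn. Qed.

Lemma residue_support_Xn d : residue_support [:: (d %% m)%N] 'X^d.
Proof.
by move=> i; rewrite inE coefXn; case: (i =P d) => [->|//]; rewrite eqxx.
Qed.

Lemma residue_support1 : residue_support [:: 0%N] 1.
Proof. by have := residue_support_Xn (d := 0); rewrite mod0n expr0. Qed.

(* Residues add under multiplication: the coefficient of T^i in p * q is a
   sum of terms p_j q_(i-j), and i = j + (i - j) forces i mod m to be the
   sum of the residues of j and i - j. *)
Lemma residue_supportM rs1 rs2 p q :
  residue_support rs1 p -> residue_support rs2 q ->
  residue_support [seq (a + b) %% m | a <- rs1, b <- rs2]%N (p * q).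
Proof.
move=> supp suppq i sum'i; rewrite coefM big1 // => -[j /= lt_j_i] _.
have le_j_i : (j <= i)%N by rewrite -ltnS.
have [rs1j|/supp->] := boolP ((j %% m)%N \in rs1); last by rewrite mul0r.
have [rs2ij|/suppq->] := boolP (((i - j) %% m)%N \in rs2); last by rewrite mulr0.
have sum_i : (i %% m)%N \in [seq (a + b) %% m | a <- rs1, b <- rs2]%N.
  by rewrite -(subnKC le_j_i) -modnDm; apply: allpairs_f.
by rewrite sum_i in sum'i.
Qed.

Lemma residue_support_prod (I : Type) (r : seq I) (P : pred I) (F : I -> {poly R}) :
  (forall k, P k -> residue_support [:: 0%N] (F k)) ->
  residue_support [:: 0%N] (\prod_(k <- r | P k) F k).
Proof.
move=> suppF; apply: (big_ind (residue_support [:: 0%N])) => //.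
- exact: residue_support1.
- by move=> p q supp suppq; have := residue_supportM supp suppq; rewrite /= mod0n.
Qed.

Lemma residue_support_one_sub_Xn k : residue_support [:: 0%N] (1 - 'X^(m * k)).
Proof.
apply: residue_supportB.
- exact: residue_support1.
- by have := residue_support_Xn (d := m * k); rewrite mulnC modnMl.
Qed.

End ResidueSupport.

(* The modulus cannot be inferred from the monomial, so make it explicit. *)
Arguments residue_support_Xn {R} m d.
Arguments residue_support_one_sub_Xn {R} m k.

Lemma g_trunc_support N : residue_support 8 [:: 1%N] (g_trunc N).
Proof.
have prod_supp : residue_support 8 [:: 0%N]
    (\prod_(1 <= k < N.+1) ((1 - 'X^(8 * k)) * (1 - 'X^(16 * k))) : {poly int}).
  apply: residue_support_prod => k _.
  have := residue_supportM (residue_support_one_sub_Xn 8 k)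
                           (residue_support_one_sub_Xn 8 (2 * k)).
  by rewrite mulnA.
by have := residue_supportM (residue_support_Xn 8 1) prod_supp.
Qed.

Lemma sqr_mod4 k : (k ^ 2 %% 4 \in [:: 0; 1])%N.
Proof.
rewrite -modnXm; have : (k %% 4 < 4)%N by rewrite ltn_mod.
by case: (k %% 4)%N => [|[|[|[|]]]].
Qed.

Lemma theta_exponent_mod8 j k : ((2 * j * k ^ 2) %% 8 \in [:: 0; (2 * j) %% 8])%N.
Proof.
have -> : (2 * j * k ^ 2 = (j * (k ^ 2 %/ 4)) * 8 + 2 * j * (k ^ 2 %% 4))%N.
  by rewrite {1}(divn_eq (k ^ 2) 4); lia.
rewrite modnMDl; have := sqr_mod4 k; rewrite !inE.
by case/orP => /eqP->; rewrite ?muln0 ?muln1 ?mod0n eqxx ?orbT.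
Qed.

Lemma theta_trunc_support j N :
  residue_support 8 [:: 0%N; ((2 * j) %% 8)%N] (theta_trunc j N).
Proof.
rewrite /theta_trunc mulr_natl; apply: residue_supportD.
  apply: (@residue_support_sub _ _ [:: 0%N]); first by move=> r; rewrite !inE => ->.
  exact: residue_support1.
apply: residue_supportMn; apply: (big_ind (residue_support 8 _)).
- exact: residue_support0.
- exact: residue_supportD.
- move=> k _; apply: residue_support_sub (residue_support_Xn 8 _).
  by move=> r; rewrite inE => /eqP ->; apply: theta_exponent_mod8.
Qed.

Lemma c_eq0 j n :
  (n %% 8 \notin [seq (a + b) %% 8 | a <- [:: 1], b <- [:: 0; (2 * j) %% 8]])%N ->
  c j n = 0.
Proof. exact: residue_supportM (@g_trunc_support n) (@theta_trunc_support j n) n. Qed.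

Theorem mainTheorem10 (n : nat) :
  (0 < n)%N -> odd n -> squarefree n ->
  ((n %% 8 == 5)%N || (n %% 8 == 7)%N -> c 1 n = 0%R) /\
  ((n %% 4 == 3)%N -> c 2 n = 0%R).
Proof.
move=> _ _ _; split => n_mod; apply: c_eq0; rewrite /= !inE.
- by case/orP: n_mod => /eqP ->.
- by move: n_mod; rewrite -(modn_dvdm n (_ : 4 %| 8)%N) //; lia.
Qed.
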